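(* For $\beta>0$ consider the $(\beta,S)$-coalescent and let $\lambda_n$ denote its total coalescence rate when there are $n$ blocks. If $\beta\in(0,1)$, $$\lim_{n\to\infty}n^{2(\beta-1)}\lambda_n=\frac{2^{\beta-1}\Gamma(\beta)}{1-\beta}.$$ If $\beta=1$, $$\lim_{n\to\infty}\frac{\lambda_n}{\log n}=2.$$
   Context: For $\beta>0$, the $(\beta,S)$-coalescent is the exchangeable coalescent (partition-valued Markov process) described as follows: whenever there are $b$ blocks, for each $k\in\mathbb{N}$, at rate $k^{-\beta}$ all current blocks are thrown independently and uniformly at random into $k$ boxes and all blocks in the same box merge (there is no Kingman/pairwise component). The total coalescence rate $\lambda_n$ is the total rate at which an event changing the partition occurs when there are $n$ blocks; equivalently $\lambda_n=\sum_{k\ge1}k^{-\beta}\,\mathbb{P}(\mathcal C^k_n)$, where $\mathcal C^k_n$ is the event that, when $n$ balls are thrown independently and uniformly into $k$ boxes, at least two balls land in the same box. *)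

From mathcomp Require Import all_boot.
From Stdlib Require Import Reals.

Set Implicit Arguments.
Unset Strict Implicit.

(* P(C^k_n): probability that n balls thrown independently and uniformly into
   k boxes produce a collision, i.e. the proportion of non-injective maps
   'I_n -> 'I_k among all k^n maps. *)
Definition coll_prob (n k : nat) : R :=
  Rdiv (INR #|[set f : {ffun 'I_n -> 'I_k} | ~~ injectiveb f]|)
       (INR #|{ffun 'I_n -> 'I_k}|).

Definition is_total_rate (beta : R) (lam : nat -> R) : Prop :=
  forall n : nat,
    infinite_sum
      (fun i : nat => Rmult (Rpower (INR i.+1) (Ropp beta)) (coll_prob n i.+1))
      (lam n).

Definition is_Gamma (beta g : R) : Prop :=
  forall eps : R, Rlt 0 eps ->
    exists delta M : R, Rlt 0 delta /\
      forall (a b : R), Rlt 0 a -> Rlt a delta -> Rlt M b ->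
        forall pr : Riemann_integrable
                      (fun t => Rmult (Rpower t (Rminus beta 1)) (exp (Ropp t))) a b,
          Rlt (Rabs (Rminus (RiemannInt pr) g)) eps.

(* Throwing [n] balls into [k] boxes, the probability of no collision is
   [Q(n,k) = k (k-1) ... (k-n+1) / k^n], so [P(C^k_n) = 1 - Q(n,k)], and
   [lambda_n = sum_k k^(-beta) (1 - Q(n,k))].  With [m = n (n-1) / 2] pairs:
   1. Product estimates: [1 - m/k <= Q(n,k) <= exp (- m/k)], and
      [Q(n,k) >= exp (- m/k) (1 - n^3/k^2)] for [k >= n].
   2. [lambda_n] is the limit of nonnegative partial sums, so bounds on the
      partial sums bound [lambda_n] ([rate_le], [rate_ge]).
   3. [beta = 1]: comparison with harmonic sums gives
      [(1 - e^(-c)) (2 ln n - ln (4c)) <= lambda_n <= 3/2 + 2 ln n].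
   4. [0 < beta < 1]: the main term [sum_k k^(-beta) (1 - exp (- m/k))] is
      compared, by Abel summation against [W(k) = sum_(j<=k) j^(-beta) ~ k^(1-beta)/(1-beta)],
      with [m^(1-beta)/(1-beta) * int_(m/(K+1))^m t^(beta-1) e^(-t) dt]; the error of the
      exponential approximation is cut at [L_n = n (floor (sqrt n) + 1)], which
      satisfies [L_n^2 >= n^3] and [L_n / n^2 -> 0].  Since [m/n^2 -> 1/2],
      [n^(2(beta-1)) lambda_n -> 2^(beta-1) Gamma(beta) / (1 - beta)]. *)

From Stdlib Require Import Reals Lra Lia Psatz ZArith.
From mathcomp Require Import all_boot.
From Coquelicot Require Import Coquelicot.
Open Scope R_scope.

Lemma exp_le x y : x <= y -> exp x <= exp y.
Proof.
move=> h; case: (Rle_lt_or_eq_dec _ _ h) => [hlt|->]; last lra.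
exact/Rlt_le/exp_increasing.
Qed.

Lemma ln_le_minus1 y : 0 < y -> ln y <= y - 1.
Proof. move=> hy; have := exp_ineq1_le (ln y); rewrite exp_ln //; lra. Qed.

Lemma Rpower_pos y c : 0 < Rpower y c.
Proof. exact: exp_pos. Qed.

Lemma Rpower_div y z c : 0 < y -> 0 < z -> Rpower (y / z) c = Rpower y c / Rpower z c.
Proof.
move=> hy hz; rewrite /Rpower /Rdiv ln_mult ?ln_Rinv //; last exact: Rinv_0_lt_compat.
by rewrite -exp_Ropp -exp_plus; congr exp; ring.
Qed.

Lemma Rpower_minus1 y c : 0 < y -> Rpower y (c - 1) = Rpower y c / y.
Proof.
move=> hy; rewrite /Rpower /Rdiv -{3}(exp_ln y hy) -exp_Ropp -exp_plus.
by congr exp; ring.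
Qed.

Lemma Rpower_1_base c : Rpower 1 c = 1.
Proof. by rewrite /Rpower ln_1 Rmult_0_r exp_0. Qed.

Lemma INR_gt0 {k} : (0 < k)%N -> 0 < INR k.
Proof. by move=> h; apply/lt_0_INR/ltP. Qed.

Lemma INR_ge2 {n} : (2 <= n)%N -> 2 <= INR n.
Proof. by move=> hn; rewrite -(INR_IZR_INZ 2); apply/le_INR/leP. Qed.

Lemma INR_pred {k} : (0 < k)%N -> INR k.-1 = INR k - 1.
Proof. by move=> k0; rewrite -{2}(prednK k0) S_INR; lra. Qed.

Lemma Rpower_le_tangent x c : 0 < x -> 0 <= c <= 1 -> Rpower x c <= 1 + c * (x - 1).
Proof.
move=> hx hc; set A := 1 + c * (x - 1).
have hA : 0 < A by rewrite /A; nra.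
have hiA : 0 < / A by exact: Rinv_0_lt_compat.
have h1 := ln_le_minus1 (x * / A) ltac:(nra).
have h2 := ln_le_minus1 (/ A) hiA.
rewrite ln_mult // ln_Rinv // in h1; rewrite ln_Rinv // in h2.
have convex : c * (x * / A - 1) + (1 - c) * (/ A - 1) = 0.
  have -> : c * (x * / A - 1) + (1 - c) * (/ A - 1) = A * / A - 1 by rewrite /A; ring.
  rewrite Rinv_r; lra.
rewrite /Rpower -(exp_ln A hA); apply: exp_le; nra.
Qed.

Lemma Rpower_concave x y c : 0 < x -> 0 < y -> 0 <= c <= 1 ->
  Rpower y c <= Rpower x c + c * (Rpower x c / x) * (y - x).
Proof.
move=> hx hy hc; have hpx := Rpower_pos x c.
have := Rpower_le_tangent (y / x) c (Rdiv_lt_0_compat _ _ hy hx) hc.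
rewrite Rpower_div // => /(Rmult_le_compat_l _ _ _ (Rlt_le _ _ hpx)).
have -> : Rpower x c * (Rpower y c / Rpower x c) = Rpower y c by field; lra.
have -> : Rpower x c * (1 + c * (y / x - 1)) = Rpower x c + c * (Rpower x c / x) * (y - x).
  by field; lra.
done.
Qed.

(* [psum f K = f 1 + ... + f K]; all sums over boxes start at [k = 1]. *)
Fixpoint psum (f : nat -> R) (K : nat) : R :=
  match K with O => 0 | S K' => psum f K' + f (S K') end.

Lemma sum_f_R0_psum a N : sum_f_R0 a N = psum (fun k => a k.-1) N.+1.
Proof. by elim: N => [|N IH] /=; [lra | rewrite IH]. Qed.

Lemma psum_ext f g K : (forall k, (0 < k)%N -> (k <= K)%N -> f k = g k) -> psum f K = psum g K.
Proof.
elim: K => [//|K IH] hfg /=; rewrite hfg // IH // => k k0 kK.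
exact/hfg/leqW.
Qed.

Lemma psum_le f g K : (forall k, (0 < k)%N -> (k <= K)%N -> f k <= g k) -> psum f K <= psum g K.
Proof.
elim: K => [|K IH] hfg /=; first lra.
have := hfg K.+1 erefl (leqnn _).
have := IH (fun k k0 kK => hfg k k0 (leqW kK)); lra.
Qed.

Lemma psum_ge0 f K : (forall k, (0 < k)%N -> 0 <= f k) -> 0 <= psum f K.
Proof. elim: K => [|K IH] hf /=; [lra | have := hf K.+1 erefl; have := IH hf; lra]. Qed.

Lemma psum_mono f a K : (forall k, (0 < k)%N -> 0 <= f k) -> (a <= K)%N -> psum f a <= psum f K.
Proof.
move=> hf; elim: K => [|K IH]; first by rewrite leqn0 => /eqP ->; lra.
rewrite leq_eqVlt => /orP [/eqP -> | haK]; first lra.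
have := IH haK; have := hf K.+1 erefl; rewrite /=; lra.
Qed.

Lemma psum_scale (f : nat -> R) u K : psum (fun k => u * f k) K = u * psum f K.
Proof. by elim: K => [|K IH] /=; [ring | rewrite IH; ring]. Qed.

Lemma psum_add (f g : nat -> R) K : psum (fun k => f k + g k) K = psum f K + psum g K.
Proof. by elim: K => [|K IH] /=; [ring | rewrite IH; ring]. Qed.

Lemma psum_lin (f g : nat -> R) u v K :
  psum (fun k => u * f k + v * g k) K = u * psum f K + v * psum g K.
Proof. by elim: K => [|K IH] /=; [ring | rewrite IH; ring]. Qed.

Lemma psum_abel (wf a : nat -> R) K :
  psum (fun k => wf k * a k) K =
  psum (fun k => psum wf k * (a k - a k.+1)) K + psum wf K * a K.+1.
Proof. by elim: K => [|K IH] /=; [ring | rewrite IH /=; ring]. Qed.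

Lemma psum_tele_le f F a K : (a <= K)%N ->
  (forall k, (a < k)%N -> (k <= K)%N -> f k <= F k - F k.-1) ->
  psum f K - psum f a <= F K - F a.
Proof.
elim: K => [|K IH]; first by rewrite leqn0 => /eqP -> _; lra.
rewrite leq_eqVlt => /orP [/eqP -> | haK] hf; first lra.
have := IH haK (fun k k0 kK => hf k k0 (leqW kK)).
have := hf K.+1 haK (leqnn _); rewrite /=; lra.
Qed.

Lemma psum_tele_ge f F a K : (a <= K)%N ->
  (forall k, (a < k)%N -> (k <= K)%N -> F k - F k.-1 <= f k) ->
  F K - F a <= psum f K - psum f a.
Proof.
move=> haK hf; have := @psum_tele_le (fun k => - f k) (fun k => - F k) a K haK.
have neg : forall J, psum (fun k => - f k) J = - psum f J.
  by elim=> [|J IH] /=; [ring | rewrite IH; ring].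
rewrite !neg; have : (forall k, (a < k)%N -> (k <= K)%N -> - f k <= - F k - - F k.-1).
  by move=> k hk1 hk2; have := hf k hk1 hk2; lra.
move=> h /(_ h); lra.
Qed.

Lemma psum_tail_inv_sq f c a K : (0 < a)%N -> (a <= K)%N -> 0 <= c ->
  (forall k, (a < k)%N -> (k <= K)%N -> f k <= c / INR k ^ 2) ->
  psum f K - psum f a <= c / INR a.
Proof.
move=> a0 haK hc hf.
have := @psum_tele_le f (fun k => - (c / INR k)) a K haK.
have hK : 0 < INR K by apply: INR_gt0; exact: leq_trans haK.
have : 0 <= c / INR K by exact: Rdiv_le_0_compat.
suff step : forall k, (a < k)%N -> (k <= K)%N -> f k <= - (c / INR k) - - (c / INR k.-1).
  by move=> hcK /(_ step); lra.
move=> k hak hkK; have k1 : (1 < k)%N by exact: leq_ltn_trans a0 hak.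
have hk := INR_ge2 k1; rewrite (INR_pred (ltnW k1)).
apply: Rle_trans (hf k hak hkK) _.
have -> : - (c / INR k) - - (c / (INR k - 1)) = c / (INR k * (INR k - 1)) by field; lra.
apply: Rmult_le_compat_l => //; apply: Rinv_le_contravar; nra.
Qed.

Lemma harmonic_le K : (0 < K)%N -> psum (fun k => / INR k) K <= 1 + ln (INR K).
Proof.
move=> K0; have := @psum_tele_le (fun k => / INR k) (fun k => ln (INR k)) 1 K K0.
rewrite /= Rinv_1 ln_1 => h.
suff : psum (fun k => / INR k) K - (0 + 1) <= ln (INR K) - 0 by lra.
apply: h => -[//|k] k1 _; rewrite /= -/(INR k.+1).
have hk : 0 < INR k by apply/lt_0_INR/ltP.
rewrite S_INR; have := ln_le_minus1 (INR k / (INR k + 1)) ltac:(apply: Rdiv_lt_0_compat; lra).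
rewrite /Rdiv ln_mult ?ln_Rinv; try lra; last by apply: Rinv_0_lt_compat; lra.
have -> : INR k * / (INR k + 1) - 1 = - / (INR k + 1) by field; lra.
lra.
Qed.

Lemma harmonic_ge K : ln (INR K + 1) <= psum (fun k => / INR k) K.
Proof.
have := @psum_tele_ge (fun k => / INR k) (fun k => ln (INR k + 1)) 0 K (leq0n K).
rewrite /= Rplus_0_l ln_1 => h.
suff : ln (INR K + 1) - 0 <= psum (fun k => / INR k) K - 0 by lra.
apply: h => -[//|k] k1 _; rewrite /= -/(INR k.+1) -S_INR.
have hk : 0 < INR k.+1 by apply/lt_0_INR/ltP.
rewrite (S_INR k.+1).
have := ln_le_minus1 ((INR k.+1 + 1) / INR k.+1) ltac:(apply: Rdiv_lt_0_compat; lra).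
rewrite /Rdiv ln_mult ?ln_Rinv //; try lra; last exact: Rinv_0_lt_compat.
have -> : (INR k.+1 + 1) * / INR k.+1 - 1 = / INR k.+1 by field; lra.
rewrite -(S_INR k); lra.
Qed.

Lemma Un_cv_ge (u : nat -> R) l c N : Un_cv u l -> (forall m, (N <= m)%N -> c <= u m) -> c <= l.
Proof.
move=> hu hc; apply: Rnot_lt_le => hlt.
have [M hM] := hu (c - l) ltac:(lra).
have := hM (maxn N M) ltac:(apply/leP; exact: leq_maxr).
have := hc (maxn N M) (leq_maxl _ _).
rewrite /R_dist => h1 h2; have := Rle_abs (u (maxn N M) - l); lra.
Qed.

Lemma Un_cv_le (u : nat -> R) l c N : Un_cv u l -> (forall m, (N <= m)%N -> u m <= c) -> l <= c.
Proof.
move=> hu hc; have := @Un_cv_ge (fun m => - u m) (- l) (- c) N.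
have hopp : Un_cv (fun m => - u m) (- l) by apply: CV_opp.
move=> /(_ hopp (fun m hm => Ropp_le_contravar _ _ (hc m hm))); lra.
Qed.

Lemma Un_cv_from_bounds (u : nat -> R) (l : R) :
  (forall eps, 0 < eps -> exists (hi : nat -> R) (b : R) (N : nat),
      Un_cv hi b /\ b < l + eps /\ forall n, (N <= n)%N -> u n <= hi n) ->
  (forall eps, 0 < eps -> exists (lo : nat -> R) (a : R) (N : nat),
      Un_cv lo a /\ l - eps < a /\ forall n, (N <= n)%N -> lo n <= u n) ->
  Un_cv u l.
Proof.
move=> hup hlow eps he.
have [hi [b [N1 [hicv [hb hle]]]]] := hup eps he.
have [lo [a [N2 [locv [ha hge]]]]] := hlow eps he.
have [N3 hN3] := hicv (l + eps - b) ltac:(lra).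
have [N4 hN4] := locv (a - (l - eps)) ltac:(lra).
exists (maxn (maxn N1 N2) (maxn N3 N4)) => n /leP hn.
have hn1 : (N1 <= n)%N by apply: leq_trans hn; rewrite !leq_max leqnn.
have hn2 : (N2 <= n)%N by apply: leq_trans hn; rewrite !leq_max leqnn orbT.
have hn3 : (N3 <= n)%coq_nat by apply/leP; apply: leq_trans hn; rewrite !leq_max leqnn orbT.
have hn4 : (N4 <= n)%coq_nat by apply/leP; apply: leq_trans hn; rewrite !leq_max leqnn !orbT.
move: (hN3 n hn3) (hN4 n hn4) (hle n hn1) (hge n hn2).
rewrite /R_dist => /Rabs_def2 [hi1 _] /Rabs_def2 [_ lo1] h1 h2; apply: Rabs_def1; lra.
Qed.

Lemma nat_floor x : 0 <= x -> exists K : nat, INR K <= x < INR K + 1.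
Proof.
move=> hx; have [h1 h2] := archimed x.
have hup : (0 < up x)%Z by apply: lt_IZR; lra.
have hz : (0 <= up x - 1)%Z by lia.
exists (Z.to_nat (up x - 1)).
rewrite INR_IZR_INZ Z2Nat.id // minus_IZR; lra.
Qed.

Lemma nat_above x : exists N : nat, x < INR N.
Proof.
case: (Rle_lt_dec 0 x) => hx; last by exists 0%N; rewrite /=; lra.
have [K [_ hK]] := nat_floor x hx; exists K.+1; rewrite S_INR; lra.
Qed.

Lemma eventually_gt C : exists N : nat, forall n, (N <= n)%N -> C < INR n.
Proof.
have [N hN] := nat_above C; exists N => n hn.
have : INR N <= INR n by apply/le_INR/leP.
lra.
Qed.

Lemma eventually_ln_gt T : exists N : nat, forall n, (N <= n)%N -> T < ln (INR n).
Proof.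
have [N hN] := eventually_gt (exp T); exists N => n hn.
rewrite -(ln_exp T); apply: ln_increasing; [exact: exp_pos | exact: hN].
Qed.

Lemma Un_cv_affine (u : nat -> R) l a b : Un_cv u l -> Un_cv (fun n => a * u n + b) (a * l + b).
Proof.
move=> /is_lim_seq_Reals hu; apply/is_lim_seq_Reals.
apply: is_lim_seq_plus'; last exact: is_lim_seq_const.
exact: is_lim_seq_scal_l hu.
Qed.

Lemma Un_cv_inv_ln : Un_cv (fun n => / ln (INR n)) 0.
Proof.
move=> eps he; have [N hN] := eventually_ln_gt (/ eps).
exists N => n /leP hn; have hl := hN n hn.
have hie : 0 < / eps by exact: Rinv_0_lt_compat.
have hl0 : 0 < ln (INR n) by lra.
rewrite /R_dist Rminus_0_r Rabs_pos_eq; last exact/Rlt_le/Rinv_0_lt_compat.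
rewrite -(Rinv_inv eps); apply: Rinv_lt_contravar => //; nra.
Qed.

Lemma Un_cv_inv_INR : Un_cv (fun n => / INR n) 0.
Proof.
apply/is_lim_seq_Reals.
by have := is_lim_seq_inv _ _ is_lim_seq_INR ltac:(by []).
Qed.

Lemma Un_cv_Rpower_0 (y x : nat -> R) c N : 0 < c -> Un_cv x 0 ->
  (forall n, (N <= n)%N -> 0 < x n /\ 0 <= y n <= Rpower (x n) c) -> Un_cv y 0.
Proof.
move=> hc hx hy eps he.
have [N' hN'] := hx (Rpower eps (/ c)) (Rpower_pos _ _).
exists (maxn N N') => n /leP hn.
have [hx0 [hy0 hyx]] := hy n (leq_trans (leq_maxl _ _) hn).
have := hN' n ltac:(apply/leP; exact: leq_trans (leq_maxr _ _) hn).
rewrite /R_dist !Rminus_0_r (Rabs_pos_eq (x n)) ?(Rabs_pos_eq (y n)); try lra.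
move=> hxe; apply: Rle_lt_trans hyx _.
have -> : eps = Rpower (Rpower eps (/ c)) c by rewrite Rpower_mult Rinv_l ?Rpower_1 //; lra.
by apply: Rlt_Rpower_l.
Qed.

Definition nocoll (n k : nat) : R := INR (k ^_ n) / INR (k ^ n).

Definition pairs (n : nat) : R := INR n * (INR n - 1) / 2.

Definition coll_approx (m : R) (k : nat) : R := 1 - exp (- (m / INR k)).

(* Counting: non-injective maps are the complement of the [k ^_ n] injective ones. *)
Lemma coll_prob_nocoll n k : (0 < k)%N -> coll_prob n k = 1 - nocoll n k.
Proof.
move=> k0; rewrite /coll_prob /nocoll.
have -> : #|[set f : {ffun 'I_n -> 'I_k} | ~~ injectiveb f]| =
   (#|{ffun 'I_n -> 'I_k}| - #|[set f : {ffun 'I_n -> 'I_k} | injectiveb f]|)%N.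
  rewrite -(cardsC [set f : {ffun 'I_n -> 'I_k} | injectiveb f]) addKn.
  by apply: eq_card => f; rewrite !inE.
rewrite card_inj_ffuns card_ffun !card_ord.
have hle : (k ^_ n <= k ^ n)%N.
  by elim: n => [//|n IH]; rewrite ffactnSr expnSr leq_mul // leq_subr.
rewrite minus_INR; last exact/leP.
have hp : 0 < INR (k ^ n) by apply: INR_gt0; rewrite expn_gt0 k0.
by field; lra.
Qed.

Lemma pairs_S n : pairs n.+1 = pairs n + INR n.
Proof. by rewrite /pairs S_INR; field. Qed.

Lemma pairs_ge0 n : 0 <= pairs n.
Proof.
rewrite /pairs; case: n => [|n]; first by rewrite /=; lra.
by rewrite S_INR; have := pos_INR n; nra.
Qed.

Lemma pairs_bounds n : (2 <= n)%N -> INR n * INR n / 4 <= pairs n <= INR n * INR n / 2.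
Proof. by move=> /INR_ge2 hn; rewrite /pairs; split; nra. Qed.

Lemma pairs_pos n : (2 <= n)%N -> 0 < pairs n.
Proof. by move=> hn; have [h _] := pairs_bounds n hn; have := INR_ge2 hn; nra. Qed.

Lemma nocoll_S n k : (0 < k)%N -> nocoll n.+1 k = nocoll n k * (INR (k - n) / INR k).
Proof.
move=> k0; rewrite /nocoll ffactnSr expnSr !mult_INR.
have h1 := INR_gt0 k0.
have h2 : 0 < INR (k ^ n) by apply: INR_gt0; rewrite expn_gt0 k0.
by field; lra.
Qed.

Lemma nocoll_ge0 n k : 0 <= nocoll n k.
Proof.
rewrite /nocoll; case: (k ^ n)%N => [|p]; first by rewrite /= Rdiv_def Rinv_0; lra.
by apply: Rdiv_le_0_compat; [apply: pos_INR | apply: lt_0_INR; lia].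
Qed.

(* The factor [(k - n) / k], with truncated subtraction: it lies in [[0, 1]], equals
   [1 - n / k] when [n <= k] and vanishes otherwise. *)
Lemma ratio_ge0 n k : 0 <= INR (k - n) / INR k.
Proof.
case: k => [|k]; first by rewrite /= Rdiv_def Rinv_0; lra.
by apply: Rdiv_le_0_compat; [apply: pos_INR | apply: lt_0_INR; lia].
Qed.

Lemma ratio_lt n k : (n <= k)%N -> (0 < k)%N -> INR (k - n) / INR k = 1 - INR n / INR k.
Proof.
move=> h k0; have hk := INR_gt0 k0.
by rewrite minus_INR; [field; lra | apply/leP].
Qed.

Lemma ratio_ge n k : (k <= n)%N -> INR (k - n) / INR k = 0.
Proof.
move=> h; have -> : (k - n = 0)%N by apply/eqP; rewrite subn_eq0.
exact: Rdiv_0_l.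
Qed.

(* Upper bound [nocoll n k <= exp (- m / k)], from [1 - x <= exp (- x)]. *)
Lemma nocoll_le_exp n k : (0 < k)%N -> nocoll n k <= exp (- (pairs n / INR k)).
Proof.
move=> k0; have hk := INR_gt0 k0.
elim: n => [|n IH].
  rewrite /nocoll /pairs /= Rdiv_1_r.
  by replace (- (0 * (0 - 1) / 2 / INR k)) with 0 by (field; lra); rewrite exp_0; lra.
rewrite nocoll_S // pairs_S.
have hr : INR (k - n) / INR k <= exp (- (INR n / INR k)).
  case: (leqP n k) => h; first by rewrite ratio_lt //; have := exp_ineq1_le (- (INR n / INR k)); lra.
  by rewrite ratio_ge; [exact/Rlt_le/exp_pos | exact: ltnW].
have -> : - ((pairs n + INR n) / INR k) = - (pairs n / INR k) + - (INR n / INR k) by field; lra.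
by rewrite exp_plus; apply: Rmult_le_compat => //; [apply: nocoll_ge0 | apply: ratio_ge0].
Qed.

(* Union bound: [nocoll n k >= 1 - m / k]. *)
Lemma nocoll_ge_linear n k : (0 < k)%N -> 1 - pairs n / INR k <= nocoll n k.
Proof.
move=> k0; have hk := INR_gt0 k0.
elim: n => [|n IH]; first by rewrite /nocoll /pairs /= Rdiv_1_r; lra.
rewrite nocoll_S // pairs_S.
case: (ltnP n k) => h.
  rewrite (ratio_lt n k (ltnW h) k0).
  have hx : INR n / INR k <= 1 by apply/Rle_div_l => //; rewrite Rmult_1_l; apply/le_INR/leP/ltnW.
  have hx0 : 0 <= INR n / INR k by apply: Rdiv_le_0_compat => //; apply: pos_INR.
  have ha : 0 <= pairs n / INR k by apply: Rdiv_le_0_compat => //; apply: pairs_ge0.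
  have -> : 1 - (pairs n + INR n) / INR k = 1 - pairs n / INR k - INR n / INR k by field; lra.
  nra.
have hkn : INR k <= INR n by apply/le_INR/leP.
have : 0 <= nocoll n k * (INR (k - n) / INR k) by apply: Rmult_le_pos; [apply: nocoll_ge0 | apply: ratio_ge0].
have : 1 <= (pairs n + INR n) / INR k by apply/Rle_div_r => //; have := pairs_ge0 n; lra.
lra.
Qed.

Lemma exp_neg_lower x : 0 <= x <= 1 -> exp (- x) * (1 - x * x) <= 1 - x.
Proof.
move=> hx; have h1 := exp_ineq1_le x.
have h2 : exp x * exp (- x) = 1 by rewrite -exp_plus Rplus_opp_r exp_0.
have h3 := exp_pos (- x); nra.
Qed.

(* The induction step of [nocoll_ge_exp_corr]: if [Q >= E A] then, after the
   factor [1 - x], [Q (1 - x) >= E exp (- x) (A - x^2)]. *)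
Lemma exp_corr_step Q E A x : 0 <= x <= 1 -> 0 < E -> A <= 1 -> 0 <= Q -> E * A <= Q ->
  E * exp (- x) * (A - x * x) <= Q * (1 - x).
Proof.
move=> hx hE hA1 hQ hEA; have hex := exp_pos (- x); have hlow := exp_neg_lower x hx.
have hEx : 0 < E * exp (- x) by nra.
case: (Rle_lt_dec 0 A) => hA0; last by nra.
have s1 : E * A * (exp (- x) * (1 - x * x)) <= Q * (1 - x).
  apply: Rmult_le_compat => //; apply: Rmult_le_pos; nra.
have s2 : 0 <= (E * exp (- x)) * ((x * x) * (1 - A)) by apply: Rmult_le_pos; nra.
nra.
Qed.

Lemma nocoll_ge_exp_corr n k : (0 < k)%N -> (n <= k)%N ->
  exp (- (pairs n / INR k)) * (1 - INR n ^ 3 / INR k ^ 2) <= nocoll n k.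
Proof.
move=> k0; have hk := INR_gt0 k0.
elim: n => [|n IH] hnk.
  rewrite /nocoll /pairs /= Rdiv_1_r.
  replace (- (0 * (0 - 1) / 2 / INR k)) with 0 by (field; lra).
  rewrite exp_0; have -> : 0 * (0 * (0 * 1)) / (INR k * (INR k * 1)) = 0 by field; lra.
  lra.
rewrite nocoll_S // pairs_S (ratio_lt n k (ltnW hnk) k0).
have hn := pos_INR n.
set x := INR n / INR k.
have hx : 0 <= x <= 1.
  split; first exact: Rdiv_le_0_compat.
  by apply/Rle_div_l => //; rewrite Rmult_1_l; apply/le_INR/leP/ltnW.
have -> : exp (- ((pairs n + INR n) / INR k)) = exp (- (pairs n / INR k)) * exp (- x).
  by rewrite /x -exp_plus; congr exp; field; lra.
have hk2 : 0 < INR k ^ 2 by nra.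
have hA : 1 - INR n.+1 ^ 3 / INR k ^ 2 <= (1 - INR n ^ 3 / INR k ^ 2) - x * x.
  have -> : x * x = INR n ^ 2 / INR k ^ 2 by rewrite /x; field; lra.
  suff : INR n ^ 3 / INR k ^ 2 + INR n ^ 2 / INR k ^ 2 <= INR n.+1 ^ 3 / INR k ^ 2 by lra.
  rewrite S_INR -Rdiv_plus_distr; apply: Rmult_le_compat_r; [exact/Rlt_le/Rinv_0_lt_compat | nra].
have hE := exp_pos (- (pairs n / INR k)).
have hA1 : 1 - INR n ^ 3 / INR k ^ 2 <= 1.
  have : 0 <= INR n ^ 3 / INR k ^ 2 by apply: Rdiv_le_0_compat; nra.
  lra.
have := exp_corr_step _ _ _ _ hx hE hA1 (nocoll_ge0 n k) (IH (ltnW hnk)).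
have := Rmult_le_compat_l _ _ _ (Rlt_le _ _ (Rmult_lt_0_compat _ _ hE (exp_pos (- x)))) hA.
lra.
Qed.

Lemma coll_ge0 n k : (0 < k)%N -> 0 <= coll_prob n k.
Proof.
move=> k0; rewrite coll_prob_nocoll //; have := nocoll_le_exp n k k0.
have : exp (- (pairs n / INR k)) <= 1.
  rewrite -exp_0; apply: exp_le.
  by have := Rdiv_le_0_compat _ _ (pairs_ge0 n) (INR_gt0 k0); lra.
lra.
Qed.

Lemma coll_le1 n k : (0 < k)%N -> coll_prob n k <= 1.
Proof. by move=> k0; rewrite coll_prob_nocoll //; have := nocoll_ge0 n k; lra. Qed.

Lemma coll_le_pairs n k : (0 < k)%N -> coll_prob n k <= pairs n / INR k.
Proof. by move=> k0; rewrite coll_prob_nocoll //; have := nocoll_ge_linear n k k0; lra. Qed.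

Lemma coll_ge_approx n k : (0 < k)%N -> coll_approx (pairs n) k <= coll_prob n k.
Proof. by move=> k0; rewrite coll_prob_nocoll // /coll_approx; have := nocoll_le_exp n k k0; lra. Qed.

Lemma coll_le_approx n k : (0 < k)%N -> (n <= k)%N ->
  coll_prob n k <= coll_approx (pairs n) k + INR n ^ 3 / INR k ^ 2.
Proof.
move=> k0 hnk; rewrite coll_prob_nocoll // /coll_approx.
have := nocoll_ge_exp_corr n k k0 hnk; have hk := INR_gt0 k0.
have he : exp (- (pairs n / INR k)) <= 1.
  rewrite -[X in _ <= X]exp_0; apply: exp_le.
  by have := Rdiv_le_0_compat _ _ (pairs_ge0 n) hk; lra.
have he0 := exp_pos (- (pairs n / INR k)).
have hq : 0 <= INR n ^ 3 / INR k ^ 2 by apply: Rdiv_le_0_compat; have := pos_INR n; nra.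
nra.
Qed.

(* The rate of the [k]-box events, [k ^ (- b)], and the summand of [lambda_n]. *)
Definition weight (b : R) (k : nat) : R := Rpower (INR k) (- b).

Definition rate_term (b : R) (n k : nat) : R := weight b k * coll_prob n k.

Lemma weight_pos b k : 0 < weight b k.
Proof. exact: Rpower_pos. Qed.

Lemma rate_term_ge0 b n k : (0 < k)%N -> 0 <= rate_term b n k.
Proof. by move=> k0; apply: Rmult_le_pos; [exact/Rlt_le/weight_pos | exact: coll_ge0]. Qed.

(* [lambda_n] is the limit of the nondecreasing partial sums [psum (rate_term b n)],
   hence is bounded above by any bound on them and below by each of them. *)
Lemma rate_le b lam n U : is_total_rate b lam ->
  (forall K, psum (rate_term b n) K <= U) -> lam n <= U.
Proof.
move=> hlam hU; apply: (Un_cv_le _ _ _ 0 (hlam n)) => K _.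
by rewrite sum_f_R0_psum (@psum_ext _ (rate_term b n)) //; case.
Qed.

Lemma rate_ge b lam n K : is_total_rate b lam -> psum (rate_term b n) K <= lam n.
Proof.
move=> hlam; apply: (Un_cv_ge _ _ _ K (hlam n)) => m hm.
rewrite sum_f_R0_psum (@psum_ext _ (rate_term b n)); last by case.
by apply: psum_mono; [exact: rate_term_ge0 | exact: leqW].
Qed.

Lemma weight_1 k : (0 < k)%N -> weight 1 k = / INR k.
Proof. by move=> k0; rewrite /weight Rpower_Ropp Rpower_1 //; exact: INR_gt0. Qed.

(* Case [beta = 1].  Upper bound: collisions have probability at most [1] for
   [k <= n^2] (a harmonic sum [<= 1 + 2 ln n]) and at most [m / k] beyond. *)
Lemma rate1_partial_le n K : (2 <= n)%N -> psum (rate_term 1 n) K <= 3 / 2 + 2 * ln (INR n).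
Proof.
move=> hn; have hnR := INR_ge2 hn.
have hn2 : (0 < n * n)%N by rewrite muln_gt0 (leq_trans _ hn).
have hterm := rate_term_ge0 1 n.
apply: Rle_trans (psum_mono _ _ _ hterm (leq_maxl K (n * n))) _.
set K' := maxn K (n * n).
have head : psum (rate_term 1 n) (n * n) <= 1 + 2 * ln (INR n).
  apply: Rle_trans (psum_le _ (fun k => / INR k) _ _) _.
    move=> k k0 _; rewrite /rate_term weight_1 //.
    have := coll_le1 n k k0; have := coll_ge0 n k k0; have hk := INR_gt0 k0.
    have hi : 0 < / INR k by exact: Rinv_0_lt_compat.
    nra.
  apply: Rle_trans (harmonic_le _ hn2) _.
  rewrite mult_INR ln_mult; lra.
have tail : psum (rate_term 1 n) K' - psum (rate_term 1 n) (n * n) <= pairs n / INR (n * n).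
  apply: psum_tail_inv_sq _ _ _ _ hn2 (leq_maxr _ _) (pairs_ge0 n) _ => k hk _.
  have k0 : (0 < k)%N by exact: leq_ltn_trans hk.
  have hk0 := INR_gt0 k0.
  rewrite /rate_term weight_1 //.
  have -> : pairs n / INR k ^ 2 = / INR k * (pairs n / INR k) by field; lra.
  by apply: Rmult_le_compat_l; [exact/Rlt_le/Rinv_0_lt_compat | exact: coll_le_pairs].
have : pairs n / INR (n * n) <= 1 / 2.
  by rewrite mult_INR; apply/Rle_div_l; [nra | have [_ ?] := pairs_bounds n hn; lra].
lra.
Qed.

Lemma coll_approx_ge m c k : 0 < c -> (0 < k)%N -> c * INR k <= m ->
  1 - exp (- c) <= coll_approx m k.
Proof.
move=> hc k0 hck; have hk := INR_gt0 k0; rewrite /coll_approx.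
suff : exp (- (m / INR k)) <= exp (- c) by lra.
apply: exp_le; suff : c <= m / INR k by lra.
by apply/Rle_div_r.
Qed.

Lemma rate1_partial_ge n c : (2 <= n)%N -> 0 < c ->
  exists K, (1 - exp (- c)) * ln (pairs n / c) <= psum (rate_term 1 n) K.
Proof.
move=> hn hc; have hm := pairs_pos n hn.
have hmc : 0 < pairs n / c by exact: Rdiv_lt_0_compat.
have [K [hK1 hK2]] := nat_floor (pairs n / c) (Rlt_le _ _ hmc).
exists K.
have he : 0 <= 1 - exp (- c).
  have : exp (- c) <= 1 by rewrite -exp_0; apply: exp_le; lra.
  lra.
apply: Rle_trans (_ : (1 - exp (- c)) * psum (fun k => / INR k) K <= _).
  apply: Rmult_le_compat_l => //; apply: Rle_trans (harmonic_ge K).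
  by apply: ln_le => //; lra.
rewrite -psum_scale; apply: psum_le => k k0 kK; rewrite /rate_term weight_1 //.
have hk := INR_gt0 k0.
have hkK : INR k <= pairs n / c.
  have : INR k <= INR K by apply/le_INR/leP.
  lra.
have hck : c * INR k <= pairs n.
  have := Rmult_le_compat_l c _ _ (Rlt_le _ _ hc) hkK.
  by have -> : c * (pairs n / c) = pairs n by field; lra.
have := Rle_trans _ _ _ (coll_approx_ge _ _ _ hc k0 hck) (coll_ge_approx n k k0).
rewrite Rmult_comm; apply: Rmult_le_compat_l; exact/Rlt_le/Rinv_0_lt_compat.
Qed.

(* The lower bound in terms of [ln n], using [n^2 / 4 <= m]. *)
Lemma rate1_lower_bound lam n c : is_total_rate 1 lam -> (2 <= n)%N -> 1 <= c ->
  (1 - exp (- c)) * (2 * ln (INR n) - ln (4 * c)) <= lam n.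
Proof.
move=> hlam hn hc; have hnR := INR_ge2 hn; have [hm _] := pairs_bounds n hn.
have [K hK] := rate1_partial_ge n c hn ltac:(lra).
apply: Rle_trans (rate_ge 1 lam n K hlam); apply: Rle_trans hK.
apply: Rmult_le_compat_l.
  have : exp (- c) <= 1 by rewrite -exp_0; apply: exp_le; lra.
  lra.
have -> : 2 * ln (INR n) - ln (4 * c) = ln (INR n * INR n / (4 * c)).
  have h4c : 0 < / (4 * c) by apply: Rinv_0_lt_compat; lra.
  have hnn : 0 < INR n * INR n by nra.
  rewrite /Rdiv (ln_mult (INR n * INR n)) // ln_Rinv; last lra.
  rewrite (ln_mult (INR n)); lra.
apply: ln_le; first by apply: Rdiv_lt_0_compat; nra.
have -> : INR n * INR n / (4 * c) = (INR n * INR n / 4) / c by field; lra.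
by apply: Rmult_le_compat_r; [apply/Rlt_le/Rinv_0_lt_compat; lra | ].
Qed.

Theorem rate1_asymptotics (lam : nat -> R) : is_total_rate 1 lam ->
  Un_cv (fun n => lam n / ln (INR n)) 2.
Proof.
move=> hlam.
have hln : forall n, (2 <= n)%N -> 0 < ln (INR n).
  by move=> n hn; rewrite -ln_1; apply: ln_increasing; have := INR_ge2 hn; lra.
apply: Un_cv_from_bounds => eps he.
- exists (fun n => 3 / 2 * / ln (INR n) + 2), 2, 2%N; split; [|split; first lra].
    by have := Un_cv_affine _ _ (3 / 2) 2 Un_cv_inv_ln; rewrite Rmult_0_r Rplus_0_l.
  move=> n hn; have hup := rate_le 1 lam n _ hlam (fun K => rate1_partial_le n K hn).
  have hl := hln n hn; apply/Rle_div_l => //.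
  by have -> : (3 / 2 * / ln (INR n) + 2) * ln (INR n) = 3 / 2 + 2 * ln (INR n) by field; lra.
- set c := Rmax 1 (ln (4 / eps)).
  have hc1 : 1 <= c by exact: Rmax_l.
  have hce : exp (- c) <= eps / 4.
    rewrite -(exp_ln (eps / 4)); last lra.
    apply: exp_le; have : ln (4 / eps) <= c by exact: Rmax_r.
    have -> : ln (eps / 4) = - ln (4 / eps).
      by rewrite -ln_Rinv; [congr ln; field; lra | apply: Rdiv_lt_0_compat; lra].
    lra.
  set a := 1 - exp (- c).
  exists (fun n => - (a * ln (4 * c)) * / ln (INR n) + 2 * a), (2 * a), 2%N.
  split; [|split; first by rewrite /a; lra].
    by have := Un_cv_affine _ _ (- (a * ln (4 * c))) (2 * a) Un_cv_inv_ln; rewrite Rmult_0_r Rplus_0_l.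
  move=> n hn; have hlo := rate1_lower_bound lam n c hlam hn hc1.
  have hl := hln n hn; apply/Rle_div_r => //.
  have -> : (- (a * ln (4 * c)) * / ln (INR n) + 2 * a) * ln (INR n)
          = a * (2 * ln (INR n) - ln (4 * c)) by field; lra.
  exact: hlo.
Qed.

Lemma weight_eq b k : (0 < k)%N -> weight b k = Rpower (INR k) (1 - b) / INR k.
Proof. by move=> k0; rewrite /weight -Rpower_minus1; [congr Rpower; ring | exact: INR_gt0]. Qed.

Lemma weight_psum_le b K : 0 < b < 1 -> psum (weight b) K <= Rpower (INR K) (1 - b) / (1 - b).
Proof.
move=> hb; have hc : 0 < 1 - b by lra.
case: K => [|K]; first by rewrite /=; apply: Rdiv_le_0_compat; [exact/Rlt_le/Rpower_pos | lra].
have := @psum_tele_le (weight b) (fun k => Rpower (INR k) (1 - b) / (1 - b)) 1 K.+1 erefl.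
rewrite /= /weight; change (INR 1) with 1; rewrite !Rpower_1_base -/(INR K.+1) => tele.
suff step : forall k, (1 < k)%N -> (k <= K.+1)%N ->
    weight b k <= Rpower (INR k) (1 - b) / (1 - b) - Rpower (INR k.-1) (1 - b) / (1 - b).
  move: (tele step); rewrite /weight -/(psum (weight b) K.+1).
  have : 1 <= 1 / (1 - b) by apply/Rle_div_r; lra.
  lra.
move=> k k1 _; have k0 : (0 < k)%N by exact: ltnW.
have hk := INR_ge2 k1; rewrite weight_eq // (INR_pred k0).
have hconc := Rpower_concave (INR k) (INR k - 1) (1 - b) ltac:(lra) ltac:(lra) ltac:(lra).
have -> : Rpower (INR k) (1 - b) / (1 - b) - Rpower (INR k - 1) (1 - b) / (1 - b)
        = (Rpower (INR k) (1 - b) - Rpower (INR k - 1) (1 - b)) / (1 - b) by field; lra.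
apply/(Rle_div_r _ _ _ hc).
have -> : Rpower (INR k) (1 - b) / INR k * (1 - b) = (1 - b) * (Rpower (INR k) (1 - b) / INR k) by ring.
lra.
Qed.

Lemma weight_psum_ge b K : 0 < b < 1 -> (Rpower (INR K + 1) (1 - b) - 1) / (1 - b) <= psum (weight b) K.
Proof.
move=> hb; have hc : 0 < 1 - b by lra.
have := @psum_tele_ge (weight b) (fun k => (Rpower (INR k + 1) (1 - b) - 1) / (1 - b)) 0 K (leq0n K).
rewrite /= Rplus_0_l Rpower_1_base.
have -> : (1 - 1) / (1 - b) = 0 by field; lra.
suff step : forall k, (0 < k)%N -> (k <= K)%N ->
    (Rpower (INR k + 1) (1 - b) - 1) / (1 - b) - (Rpower (INR k.-1 + 1) (1 - b) - 1) / (1 - b)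
      <= weight b k.
  by move=> /(_ step); lra.
move=> k k0 _; have hk := INR_gt0 k0; rewrite weight_eq // (INR_pred k0).
have hconc := Rpower_concave (INR k) (INR k + 1) (1 - b) ltac:(lra) ltac:(lra) ltac:(lra).
have -> : INR k - 1 + 1 = INR k by ring.
have -> : (Rpower (INR k + 1) (1 - b) - 1) / (1 - b) - (Rpower (INR k) (1 - b) - 1) / (1 - b)
        = (Rpower (INR k + 1) (1 - b) - Rpower (INR k) (1 - b)) / (1 - b) by field; lra.
apply/(Rle_div_l _ _ _ hc).
have -> : Rpower (INR k) (1 - b) / INR k * (1 - b) = (1 - b) * (Rpower (INR k) (1 - b) / INR k) by ring.
lra.
Qed.

Definition gamma_fun (b s : R) : R := Rpower s (b - 1) * exp (- s).

Lemma gamma_fun_continuous b s : 0 < s -> continuous (gamma_fun b) s.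
Proof. by move=> hs; apply: ex_derive_continuous; rewrite /gamma_fun /Rpower; auto_derive; lra. Qed.

Lemma gamma_fun_pos b s : 0 < gamma_fun b s.
Proof. exact: Rmult_lt_0_compat (Rpower_pos _ _) (exp_pos _). Qed.

Lemma ex_RInt_gamma_fun b x y : 0 < x -> x <= y -> ex_RInt (gamma_fun b) x y.
Proof.
move=> hx hxy; apply: ex_RInt_continuous => z.
by rewrite Rmin_left // => -[hz _]; apply: gamma_fun_continuous; lra.
Qed.

Lemma RInt_gamma_fun_ge0 b x y : 0 < x -> x <= y -> 0 <= RInt (gamma_fun b) x y.
Proof.
move=> hx hxy; apply: RInt_ge_0 => //; first exact: ex_RInt_gamma_fun.
by move=> z _; exact/Rlt_le/gamma_fun_pos.
Qed.

(* [is_Gamma] is stated with Riemann integrals of the standard library;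
   on compact subintervals of [(0, +oo)] they agree with Coquelicot's [RInt]. *)
Lemma RInt_gamma_fun_Riemann b x y
  (pr : Riemann_integrable (fun t => Rmult (Rpower t (Rminus b 1)) (exp (Ropp t))) x y) :
  RInt (gamma_fun b) x y = RiemannInt pr.
Proof. by rewrite -RInt_Reals. Qed.

Lemma gamma_approx_below b g : is_Gamma b g -> forall eps, 0 < eps ->
  exists d M, 0 < d /\ forall x y, 0 < x -> x < d -> M < y -> x <= y ->
    g - eps < RInt (gamma_fun b) x y.
Proof.
move=> hG eps he; have [d [M [hd hM]]] := hG eps he.
exists d, M; split => // x y hx hxd hMy hxy.
have pr := ex_RInt_Reals_0 _ _ _ (ex_RInt_gamma_fun b x y hx hxy).
have := hM x y hx hxd hMy pr; rewrite -RInt_gamma_fun_Riemann => hh.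
have := Rle_abs (g - RInt (gamma_fun b) x y); rewrite Rabs_minus_sym; lra.
Qed.

(* Since the integrand is positive, every integral over [[x, y]] is at most [Gamma(b)]. *)
Lemma gamma_bound_above b g : is_Gamma b g -> forall x y, 0 < x -> x <= y ->
  RInt (gamma_fun b) x y <= g.
Proof.
move=> hG x y hx hxy; apply: Rnot_lt_le => hlt.
have [d [M [hd hM]]] := hG (RInt (gamma_fun b) x y - g) ltac:(lra).
set x' := Rmin x (d / 2); set y' := Rmax y (M + 1).
have hx'1 : x' <= x by exact: Rmin_l.
have hx'2 : x' <= d / 2 by exact: Rmin_r.
have hx'0 : 0 < x' by apply: Rmin_glb_lt; lra.
have hy'1 : y <= y' by exact: Rmax_l.
have hy'2 : M + 1 <= y' by exact: Rmax_r.
have pr := ex_RInt_Reals_0 _ _ _ (ex_RInt_gamma_fun b x' y' hx'0 ltac:(lra)).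
have := hM x' y' hx'0 ltac:(lra) ltac:(lra) pr; rewrite -RInt_gamma_fun_Riemann.
have -> : RInt (gamma_fun b) x' y' =
    RInt (gamma_fun b) x' x + RInt (gamma_fun b) x y + RInt (gamma_fun b) y y'.
  rewrite -(RInt_Chasles (gamma_fun b) x' x y'); try (apply: ex_RInt_gamma_fun; lra).
  rewrite -(RInt_Chasles (gamma_fun b) x y y'); try (apply: ex_RInt_gamma_fun; lra).
  by rewrite /plus /=; ring.
have := RInt_gamma_fun_ge0 b x' x hx'0 hx'1.
have := RInt_gamma_fun_ge0 b y y' (Rlt_le_trans _ _ _ hx hxy) hy'1.
move=> h1 h2 /Rabs_def2 [h3 _]; lra.
Qed.

Lemma RInt_exp_neg x y : RInt (fun s => exp (- s)) x y = exp (- x) - exp (- y).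
Proof.
apply: is_RInt_unique.
have := @is_RInt_derive _ (fun s => - exp (- s)) (fun s => exp (- s)) x y.
rewrite /minus /plus /opp /=.
have -> : - exp (- y) + - - exp (- x) = exp (- x) - exp (- y) by ring.
apply; first by move=> z _; auto_derive => //; ring.
by move=> z _; apply: ex_derive_continuous; auto_derive.
Qed.

(* The substitution [s = m / t]: [m^(1-b) gamma_fun b s = (m / s)^(1-b) e^(-s)]. *)
Lemma gamma_fun_scale b m s : 0 < m -> 0 < s ->
  Rpower m (1 - b) * gamma_fun b s = Rpower (m / s) (1 - b) * exp (- s).
Proof.
move=> hm hs; rewrite /gamma_fun /Rpower /Rdiv ln_mult //; last exact: Rinv_0_lt_compat.
by rewrite ln_Rinv // -Rmult_assoc -exp_plus; congr (exp _ * _); ring.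
Qed.

Definition approx_step (m : R) (k : nat) : R := exp (- (m / (INR k + 1))) - exp (- (m / INR k)).

Lemma coll_approx_step m k : coll_approx m k - coll_approx m k.+1 = approx_step m k.
Proof. by rewrite /coll_approx /approx_step (S_INR k); ring. Qed.

Lemma approx_step_ge0 m k : 0 < m -> (0 < k)%N -> 0 <= approx_step m k.
Proof.
move=> hm k0; rewrite /approx_step; have hk := INR_gt0 k0.
suff : exp (- (m / INR k)) <= exp (- (m / (INR k + 1))) by lra.
apply: exp_le; suff : m / (INR k + 1) <= m / INR k by lra.
by apply: Rmult_le_compat_l; [lra | apply: Rinv_le_contravar; lra].
Qed.

Lemma coll_approx_ge0 m k : 0 < m -> 0 <= coll_approx m k.
Proof.
move=> hm; rewrite /coll_approx; suff : exp (- (m / INR k)) <= 1 by lra.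
rewrite -exp_0; apply: exp_le; suff : 0 <= m / INR k by lra.
case: k => [|k]; first by rewrite /= Rdiv_def Rinv_0; lra.
by apply: Rdiv_le_0_compat; [lra | apply: lt_0_INR; lia].
Qed.

Lemma coll_approx_le m k : 0 < m -> (0 < k)%N -> coll_approx m k <= m / INR k.
Proof. by move=> hm k0; rewrite /coll_approx; have := exp_ineq1_le (- (m / INR k)); lra. Qed.

(* On the slice [[m / (k + 1), m / k]] the factor [(m / s)^(1-b)] lies between
   [k^(1-b)] and [(k + 1)^(1-b)], which sandwiches the slice of the Gamma integral. *)
Lemma gamma_slice_bounds b m k : 0 < b < 1 -> 0 < m -> (0 < k)%N ->
  Rpower (INR k) (1 - b) * approx_step m k
    <= Rpower m (1 - b) * RInt (gamma_fun b) (m / (INR k + 1)) (m / INR k)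
  /\ Rpower m (1 - b) * RInt (gamma_fun b) (m / (INR k + 1)) (m / INR k)
    <= Rpower (INR k + 1) (1 - b) * approx_step m k.
Proof.
move=> hb hm k0; have hk := INR_gt0 k0.
set lo := m / (INR k + 1); set hi := m / INR k.
have hlo : 0 < lo by apply: Rdiv_lt_0_compat; lra.
have hlohi : lo <= hi by apply: Rmult_le_compat_l; [lra | apply: Rinv_le_contravar; lra].
have hexp : ex_RInt (fun s => exp (- s)) lo hi.
  by apply: ex_RInt_continuous => z _; apply: ex_derive_continuous; auto_derive.
have hg := ex_RInt_gamma_fun b lo hi hlo hlohi.
rewrite /approx_step -/lo -/hi -RInt_exp_neg.
rewrite -[Rpower m _ * _](RInt_scal _ _ _ _ hg).
rewrite -[Rpower (INR k) _ * _](RInt_scal _ _ _ _ hexp).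
rewrite -[Rpower (INR k + 1) _ * _](RInt_scal _ _ _ _ hexp).
have hslice : forall s, lo <= s <= hi -> INR k <= m / s <= INR k + 1.
  move=> s [hs1 hs2]; have hs : 0 < s by lra.
  have e1 : m / INR k * INR k = m by field; lra.
  have e2 : m / (INR k + 1) * (INR k + 1) = m by field; lra.
  split.
  - apply/Rle_div_r => //.
    by have := Rmult_le_compat_r (INR k) _ _ (Rlt_le _ _ hk) hs2; rewrite /hi e1; lra.
  - apply/Rle_div_l => //.
    by have := Rmult_le_compat_r (INR k + 1) _ _ ltac:(lra) hs1; rewrite /lo e2; lra.
split; apply: RInt_le => //; try (apply: ex_RInt_scal; assumption).
all: move=> s [hs1 hs2]; have hs0 : 0 < s by lra.
all: rewrite /scal /= /mult /= gamma_fun_scale //.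
all: apply: Rmult_le_compat_r; first exact/Rlt_le/exp_pos.
all: have [hk1 hk2] := hslice s (conj (Rlt_le _ _ hs1) (Rlt_le _ _ hs2)).
all: apply: Rle_Rpower_l; [lra | split; [|lra]].
- exact: hk.
- exact: Rdiv_lt_0_compat.
Qed.

Lemma gamma_slices_sum b m K : 0 < m ->
  psum (fun k => RInt (gamma_fun b) (m / (INR k + 1)) (m / INR k)) K =
  RInt (gamma_fun b) (m / (INR K + 1)) m.
Proof.
move=> hm; elim: K => [|K IH]; first by rewrite /= Rplus_0_l Rdiv_1_r RInt_point.
rewrite /= IH -/(INR K.+1) Rplus_comm (S_INR K).
have hK := pos_INR K.
have h1 : 0 < m / (INR K + 1 + 1) by apply: Rdiv_lt_0_compat; lra.
have h12 : m / (INR K + 1 + 1) <= m / (INR K + 1).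
  by apply: Rmult_le_compat_l; [lra | apply: Rinv_le_contravar; lra].
have h23 : m / (INR K + 1) <= m by apply/Rle_div_l; nra.
by apply: RInt_Chasles; apply: ex_RInt_gamma_fun => //; lra.
Qed.

Lemma approx_step_sum m K : psum (approx_step m) K = exp (- (m / (INR K + 1))) - exp (- m).
Proof.
elim: K => [|K IH]; first by rewrite /= Rplus_0_l Rdiv_1_r; lra.
by rewrite /= IH /approx_step -/(INR K.+1) (S_INR K); ring.
Qed.

(* The main term [M(K) = sum_{k <= K} k^(-b) (1 - exp (- m / k))] compared with
   [m^(1-b) / (1 - b) * int_{m/(K+1)}^m t^(b-1) e^(-t) dt], by Abel summation
   against [W(k) = sum_{j <= k} j^(-b)] and [gamma_slice_bounds]. *)
Lemma main_term_le b m K : 0 < b < 1 -> 0 < m ->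
  psum (fun k => weight b k * coll_approx m k) K <=
  Rpower m (1 - b) / (1 - b) * RInt (gamma_fun b) (m / (INR K + 1)) m
    + psum (weight b) K * coll_approx m K.+1.
Proof.
move=> hb hm; have hc : 0 < 1 - b by lra.
rewrite psum_abel; apply: Rplus_le_compat_r.
rewrite -(gamma_slices_sum b m K hm).
rewrite -psum_scale; apply: psum_le => k k0 _; rewrite coll_approx_step.
have [hslice _] := gamma_slice_bounds b m k hb hm k0.
have hD := approx_step_ge0 m k hm k0.
apply: Rle_trans (Rmult_le_compat_r _ _ _ hD (weight_psum_le b k hb)) _.
have -> : Rpower m (1 - b) / (1 - b) * RInt (gamma_fun b) (m / (INR k + 1)) (m / INR k)
        = (Rpower m (1 - b) * RInt (gamma_fun b) (m / (INR k + 1)) (m / INR k)) / (1 - b) by field; lra.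
have -> : Rpower (INR k) (1 - b) / (1 - b) * approx_step m k
        = (Rpower (INR k) (1 - b) * approx_step m k) / (1 - b) by field; lra.
by apply: Rmult_le_compat_r; [exact/Rlt_le/Rinv_0_lt_compat |].
Qed.

Lemma main_term_ge b m K : 0 < b < 1 -> 0 < m ->
  (Rpower m (1 - b) * RInt (gamma_fun b) (m / (INR K + 1)) m - 1) / (1 - b) <=
  psum (fun k => weight b k * coll_approx m k) K.
Proof.
move=> hb hm; have hc : 0 < 1 - b by lra.
rewrite psum_abel.
have hlast : 0 <= psum (weight b) K * coll_approx m K.+1.
  apply: Rmult_le_pos; last exact: coll_approx_ge0.
  by apply: psum_ge0 => k _; exact/Rlt_le/weight_pos.
have hsteps : psum (approx_step m) K <= 1.
  rewrite approx_step_sum; have := exp_pos (- m).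
  suff : exp (- (m / (INR K + 1))) <= 1 by lra.
  rewrite -[X in _ <= X]exp_0; apply: exp_le.
  have : 0 <= m / (INR K + 1) by apply: Rdiv_le_0_compat; have := pos_INR K; lra.
  lra.
suff : (Rpower m (1 - b) * RInt (gamma_fun b) (m / (INR K + 1)) m - psum (approx_step m) K) / (1 - b)
    <= psum (fun k => psum (weight b) k * (coll_approx m k - coll_approx m k.+1)) K.
  have : (Rpower m (1 - b) * RInt (gamma_fun b) (m / (INR K + 1)) m - 1) / (1 - b) <=
         (Rpower m (1 - b) * RInt (gamma_fun b) (m / (INR K + 1)) m - psum (approx_step m) K) / (1 - b).
    by apply: Rmult_le_compat_r; [exact/Rlt_le/Rinv_0_lt_compat | lra].
  lra.
rewrite -(gamma_slices_sum b m K hm).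
have -> : (Rpower m (1 - b) * psum (fun k => RInt (gamma_fun b) (m / (INR k + 1)) (m / INR k)) K
          - psum (approx_step m) K) / (1 - b) =
     psum (fun k => (Rpower m (1 - b) / (1 - b)) * RInt (gamma_fun b) (m / (INR k + 1)) (m / INR k)
                    + (- / (1 - b)) * approx_step m k) K.
  by rewrite psum_lin; field; lra.
apply: psum_le => k k0 _; rewrite coll_approx_step.
have [_ hslice] := gamma_slice_bounds b m k hb hm k0.
have hD := approx_step_ge0 m k hm k0.
apply: Rle_trans (Rmult_le_compat_r _ _ _ hD (weight_psum_ge b k hb)).
have -> : Rpower m (1 - b) / (1 - b) * RInt (gamma_fun b) (m / (INR k + 1)) (m / INR k)
          + - / (1 - b) * approx_step m k
        = (Rpower m (1 - b) * RInt (gamma_fun b) (m / (INR k + 1)) (m / INR k) - approx_step m k) / (1 - b).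
  by field; lra.
have -> : (Rpower (INR k + 1) (1 - b) - 1) / (1 - b) * approx_step m k
        = (Rpower (INR k + 1) (1 - b) * approx_step m k - approx_step m k) / (1 - b) by field; lra.
by apply: Rmult_le_compat_r; [exact/Rlt_le/Rinv_0_lt_compat | lra].
Qed.

Lemma abel_boundary_le b m N : 0 < b < 1 -> 0 < m -> (0 < N)%N ->
  m / (1 - b) <= Rpower (INR N) b -> psum (weight b) N * coll_approx m N.+1 <= 1.
Proof.
move=> hb hm N0 hNb; have hc : 0 < 1 - b by lra.
have hN := INR_gt0 N0; have hpb := Rpower_pos (INR N) b.
have hW := weight_psum_le b N hb.
have ha : coll_approx m N.+1 <= m / INR N.
  apply: Rle_trans (coll_approx_le m N.+1 hm erefl) _.
  by apply: Rmult_le_compat_l; [lra | apply: Rinv_le_contravar => //; rewrite S_INR; lra].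
have hW0 : 0 <= psum (weight b) N by apply: psum_ge0 => k _; exact/Rlt_le/weight_pos.
apply: Rle_trans (Rmult_le_compat _ _ _ _ hW0 (coll_approx_ge0 m N.+1 hm) hW ha) _.
have -> : Rpower (INR N) (1 - b) / (1 - b) * (m / INR N)
        = m / (1 - b) * (Rpower (INR N) (1 - b) / INR N) by field; lra.
rewrite -Rpower_minus1 // (_ : 1 - b - 1 = - b); last by ring.
rewrite Rpower_Ropp; change (m / (1 - b) / Rpower (INR N) b <= 1).
by apply/Rle_div_l => //; lra.
Qed.

Lemma main_term_bound b g m K : 0 < b < 1 -> 0 < m -> is_Gamma b g ->
  psum (fun k => weight b k * coll_approx m k) K <= Rpower m (1 - b) * g / (1 - b) + 1.
Proof.
move=> hb hm hG; have hc : 0 < 1 - b by lra.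
have hr := Rpower_pos (m / (1 - b)) (/ b).
have [N hN] := nat_above (Rpower (m / (1 - b)) (/ b) + INR K).
have hKN : (K <= N)%N by apply/leP/INR_le; have := pos_INR K; lra.
have N0 : (0 < N)%N by apply/ltP/INR_lt; rewrite /=; have := pos_INR K; lra.
have hNb : m / (1 - b) <= Rpower (INR N) b.
  have -> : m / (1 - b) = Rpower (Rpower (m / (1 - b)) (/ b)) b.
    by rewrite Rpower_mult Rinv_l ?Rpower_1 //; [apply: Rdiv_lt_0_compat | ]; lra.
  by apply: Rle_Rpower_l; [lra | split; have := pos_INR K; lra].
apply: Rle_trans (psum_mono _ _ _ _ hKN) _.
  by move=> k _; apply: Rmult_le_pos; [exact/Rlt_le/weight_pos | exact: coll_approx_ge0].
apply: Rle_trans (main_term_le b m N hb hm) _.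
have hI : RInt (gamma_fun b) (m / (INR N + 1)) m <= g.
  apply: gamma_bound_above hG _ _ _ _; first by apply: Rdiv_lt_0_compat; have := pos_INR N; lra.
  by apply/Rle_div_l; have := pos_INR N; nra.
have := abel_boundary_le b m N hb hm N0 hNb.
have : Rpower m (1 - b) / (1 - b) * RInt (gamma_fun b) (m / (INR N + 1)) m
       <= Rpower m (1 - b) * g / (1 - b).
  have -> : Rpower m (1 - b) * g / (1 - b) = Rpower m (1 - b) / (1 - b) * g by field; lra.
  by apply: Rmult_le_compat_l => //; apply: Rdiv_le_0_compat; [exact/Rlt_le/Rpower_pos | lra].
lra.
Qed.

(* Error term of the exponential approximation: below the cut [L] a collision has
   probability at most [1]; from [L >= n] on it exceeds [coll_approx] by at most [n^3 / k^2]. *)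
Definition correction (b : R) (n L k : nat) : R :=
  if (k < L)%N then weight b k else INR n ^ 3 * weight b k / INR k ^ 2.

Lemma correction_ge0 b n L k : 0 <= correction b n L k.
Proof.
rewrite /correction; case: ifP => _; first exact/Rlt_le/weight_pos.
case: k => [|k]; first by rewrite /= Rmult_0_l Rdiv_def Rinv_0; lra.
have hk := @INR_gt0 k.+1 erefl.
apply: Rdiv_le_0_compat; last exact: pow_lt.
by apply: Rmult_le_pos; [apply/pow_le/pos_INR | exact/Rlt_le/weight_pos].
Qed.

Lemma rate_term_split b n L k : (0 < k)%N -> (2 <= n)%N -> (n <= L)%N ->
  rate_term b n k <= weight b k * coll_approx (pairs n) k + correction b n L k.
Proof.
move=> k0 hn hnL; rewrite /rate_term /correction; have hw := weight_pos b k.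
have ha := coll_approx_ge0 (pairs n) k (pairs_pos n hn).
case: ifP => hk.
  have := Rmult_le_compat_l _ _ _ (Rlt_le _ _ hw) (coll_le1 n k k0).
  have : 0 <= weight b k * coll_approx (pairs n) k by apply: Rmult_le_pos; lra.
  lra.
have hLk : (n <= k)%N by apply: leq_trans hnL _; rewrite leqNgt hk.
have := Rmult_le_compat_l _ _ _ (Rlt_le _ _ hw) (coll_le_approx n k k0 hLk).
have -> : weight b k * (coll_approx (pairs n) k + INR n ^ 3 / INR k ^ 2)
        = weight b k * coll_approx (pairs n) k + INR n ^ 3 * weight b k / INR k ^ 2.
  by have := INR_gt0 k0; move=> ?; field; lra.
done.
Qed.

(* The errors sum to [O(L^(1-b))] when [n^3 <= L^2]: [L^(1-b)/(1-b)] for the head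
   [k < L] and [n^3 L^(-b) / (L - 1) <= 2 L^(1-b)] for the tail. *)
Lemma correction_sum_le b n L K : 0 < b < 1 -> (2 <= L)%N -> INR n ^ 3 <= INR L ^ 2 ->
  psum (correction b n L) K <= Rpower (INR L) (1 - b) * (/ (1 - b) + 2).
Proof.
move=> hb hL hn3; have hc : 0 < 1 - b by lra.
have L0 : (0 < L)%N by exact: leq_trans hL.
have L1 : (0 < L.-1)%N by rewrite -ltnS (prednK L0).
have hLR := INR_ge2 hL; have hL1 := INR_pred L0.
have hpL := Rpower_pos (INR L) (1 - b); have hpb := Rpower_pos (INR L) (- b).
have hLb : Rpower (INR L) (- b) * INR L = Rpower (INR L) (1 - b).
  rewrite -[X in _ * X](Rpower_1 (INR L)); last lra.
  by rewrite -Rpower_plus; congr Rpower; ring.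
apply: Rle_trans (psum_mono _ _ _ (fun k _ => correction_ge0 b n L k) (leq_maxl K L.-1)) _.
have head : psum (correction b n L) L.-1 <= Rpower (INR L) (1 - b) / (1 - b).
  rewrite (@psum_ext _ (weight b)); last first.
    by move=> k _ hk; rewrite /correction ifT // -(prednK L0) ltnS.
  apply: Rle_trans (weight_psum_le b L.-1 hb) _.
  apply: Rmult_le_compat_r; first exact/Rlt_le/Rinv_0_lt_compat.
  by apply: Rle_Rpower_l; lra.
have tail : psum (correction b n L) (maxn K L.-1) - psum (correction b n L) L.-1
            <= INR n ^ 3 * Rpower (INR L) (- b) / INR L.-1.
  apply: psum_tail_inv_sq L1 (leq_maxr _ _) _ _.
    by apply: Rmult_le_pos; [apply/pow_le/pos_INR | lra].
  move=> k hLk1 _; have hLk : (L <= k)%N by rewrite -(prednK L0).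
  have k0 : (0 < k)%N by exact: leq_trans hLk.
  have hk := INR_gt0 k0; have hkL : INR L <= INR k by apply/le_INR/leP.
  rewrite /correction ifF; last by rewrite ltnNge hLk.
  have hw : weight b k <= Rpower (INR L) (- b).
    by rewrite /weight !Rpower_Ropp; apply: Rinv_le_contravar; [exact: Rpower_pos | apply: Rle_Rpower_l; lra].
  have hn0 : 0 <= INR n ^ 3 by apply/pow_le/pos_INR.
  by apply: Rmult_le_compat_r; [apply/Rlt_le/Rinv_0_lt_compat; nra | exact: Rmult_le_compat_l].
have : INR n ^ 3 * Rpower (INR L) (- b) / INR L.-1 <= 2 * Rpower (INR L) (1 - b).
  rewrite hL1; apply/Rle_div_l; first lra.
  rewrite -hLb; have := Rmult_le_compat_r _ _ _ (Rlt_le _ _ hpb) hn3; nra.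
have : Rpower (INR L) (1 - b) / (1 - b) + 2 * Rpower (INR L) (1 - b) = Rpower (INR L) (1 - b) * (/ (1 - b) + 2).
  by field; lra.
lra.
Qed.

(* The cut [L_n = n (floor (sqrt n) + 1)]: [L_n >= n], [L_n^2 >= n^3] and [L_n / n^2 -> 0]. *)
Definition cutoff (n : nat) : nat := (n * (Nat.sqrt n).+1)%N.

Lemma sqrt_bounds n : INR (Nat.sqrt n) * INR (Nat.sqrt n) <= INR n < (INR (Nat.sqrt n) + 1) ^ 2.
Proof.
have [h1 h2] := Nat.sqrt_spec n (Nat.le_0_l n).
split; first by rewrite -mult_INR; exact: le_INR.
by have := lt_INR _ _ h2; rewrite mult_INR S_INR; lra.
Qed.

Lemma cutoff_bounds n : (2 <= n)%N -> (n <= cutoff n)%N /\ (2 <= cutoff n)%N /\ INR n ^ 3 <= INR (cutoff n) ^ 2.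
Proof.
move=> hn; have hnL : (n <= cutoff n)%N by rewrite /cutoff leq_pmulr.
split => //; split; first exact: leq_trans hn hnL.
rewrite /cutoff mult_INR S_INR; have [_ h2] := sqrt_bounds n.
by have := pos_INR n; have := pos_INR (Nat.sqrt n); nra.
Qed.

Lemma cutoff_ratio n j : (0 < j)%N -> (j * j <= n)%N ->
  INR (cutoff n) / (INR n * INR n) <= 2 / INR j.
Proof.
move=> hj hjn; set s := Nat.sqrt n.
have hsj : (j <= s)%N.
  have : (Nat.sqrt (j * j) <= Nat.sqrt n)%coq_nat by apply/Nat.sqrt_le_mono/leP.
  by rewrite Nat.sqrt_square => /leP.
have [hs1 _] := sqrt_bounds n; rewrite -/s in hs1.
have hjR := INR_gt0 hj; have hsR : INR j <= INR s by apply/le_INR/leP.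
have hn1 : (1 <= n)%N by apply: leq_trans hjn; rewrite muln_gt0 hj.
have hn : 1 <= INR n by rewrite -INR_1; apply/le_INR/leP.
rewrite /cutoff mult_INR S_INR -/s.
have -> : INR n * (INR s + 1) / (INR n * INR n) = (INR s + 1) / INR n by field; lra.
apply/Rle_div_l; first lra.
have -> : 2 / INR j * INR n = (2 * INR n) / INR j by field; lra.
apply/Rle_div_r => //; nra.
Qed.

Lemma rate_upper_bound b g lam n : 0 < b < 1 -> is_Gamma b g -> is_total_rate b lam -> (2 <= n)%N ->
  lam n <= Rpower (pairs n) (1 - b) * g / (1 - b) + 1
           + Rpower (INR (cutoff n)) (1 - b) * (/ (1 - b) + 2).
Proof.
move=> hb hG hlam hn; apply: rate_le hlam _ => K.
have [hnL [hL hL3]] := cutoff_bounds n hn.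
apply: Rle_trans (_ : psum (fun k => weight b k * coll_approx (pairs n) k
                                      + correction b n (cutoff n) k) K <= _).
  by apply: psum_le => k k0 _; exact: rate_term_split.
rewrite psum_add.
have := main_term_bound b g (pairs n) K hb (pairs_pos n hn) hG.
have := correction_sum_le b n (cutoff n) K hb hL hL3.
lra.
Qed.

Lemma rate_lower_bound b lam n K : 0 < b < 1 -> is_total_rate b lam -> (2 <= n)%N ->
  (Rpower (pairs n) (1 - b) * RInt (gamma_fun b) (pairs n / (INR K + 1)) (pairs n) - 1) / (1 - b) <= lam n.
Proof.
move=> hb hlam hn.
apply: Rle_trans (main_term_ge b (pairs n) K hb (pairs_pos n hn)) _.
apply: Rle_trans (rate_ge b lam n K hlam).
apply: psum_le => k k0 _; rewrite /rate_term.
by apply: Rmult_le_compat_l; [exact/Rlt_le/weight_pos | exact: coll_ge_approx].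
Qed.

Lemma Rpower_rescale b n x : 0 < n -> 0 < x ->
  Rpower n (2 * (b - 1)) * Rpower x (1 - b) = Rpower (x / (n * n)) (1 - b).
Proof.
move=> hn hx; rewrite /Rpower -exp_plus /Rdiv ln_mult //; last by apply: Rinv_0_lt_compat; nra.
by rewrite ln_Rinv ?ln_mult //; [congr exp; ring | nra].
Qed.

Lemma scale_cv0 b : b < 1 -> Un_cv (fun n => Rpower (INR n) (2 * (b - 1))) 0.
Proof.
move=> hb; apply: (Un_cv_Rpower_0 _ _ (1 - b) 1 ltac:(lra) Un_cv_inv_INR) => n n1.
have hn := INR_gt0 n1; have hn1 : 1 <= INR n by rewrite -INR_1; apply/le_INR/leP.
split; first exact: Rinv_0_lt_compat.
split; first exact/Rlt_le/Rpower_pos.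
have := Rpower_rescale b (INR n) 1 hn Rlt_0_1.
rewrite Rpower_1_base Rmult_1_r => ->; apply: Rle_Rpower_l; first lra.
split; first by apply: Rdiv_lt_0_compat; nra.
rewrite /Rdiv Rmult_1_l; apply: Rinv_le_contravar; nra.
Qed.

Lemma cutoff_ratio_cv : Un_cv (fun n => INR (cutoff n) / (INR n * INR n)) 0.
Proof.
move=> eps he; have [j hj] := nat_above (2 / eps).
have j0 : (0 < j)%N.
  have : 0 < 2 / eps by apply: Rdiv_lt_0_compat; lra.
  by move=> h; apply/ltP/INR_lt; rewrite /=; lra.
exists (j * j)%N => n /leP hn; have hjR := INR_gt0 j0.
have n0 : (0 < n)%N by apply: leq_trans hn; rewrite muln_gt0 j0.
have hnR := INR_gt0 n0.
rewrite /R_dist Rminus_0_r Rabs_pos_eq; last by apply: Rdiv_le_0_compat; [apply: pos_INR | nra].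
apply: Rle_lt_trans (cutoff_ratio n j j0 hn) _.
apply/Rlt_div_l => //; have := Rmult_lt_compat_r eps _ _ he hj.
have -> : 2 / eps * eps = 2 by field; lra.
lra.
Qed.

Lemma cutoff_scale_cv0 b : b < 1 ->
  Un_cv (fun n => Rpower (INR (cutoff n) / (INR n * INR n)) (1 - b)) 0.
Proof.
move=> hb; apply: (Un_cv_Rpower_0 _ _ (1 - b) 2 ltac:(lra) cutoff_ratio_cv) => n hn.
have hnR := INR_ge2 hn; have [hnL _] := cutoff_bounds n hn.
have hL : 0 < INR (cutoff n) by apply: INR_gt0; exact: leq_trans (ltnW hn) hnL.
split; first by apply: Rdiv_lt_0_compat; nra.
by split; [exact/Rlt_le/Rpower_pos | lra].
Qed.

(* [m_n / n^2 = (1 - 1/n) / 2 -> 1/2]. *)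
Lemma pairs_scale_cv b : 0 < b < 1 ->
  Un_cv (fun n => Rpower (pairs n / (INR n * INR n)) (1 - b)) (Rpower 2 (b - 1)).
Proof.
move=> hb; set P := Rpower 2 (b - 1).
have hP : P = Rpower (/ 2) (1 - b) by rewrite /P /Rpower ln_Rinv; [congr exp; ring | lra].
apply/is_lim_seq_Reals; apply: (is_lim_seq_le_le_loc (fun n => (- P) * / INR n + P) _ (fun _ => P)).
- exists 2%N => n /leP hn; have hnR := INR_ge2 hn.
  have e : pairs n / (INR n * INR n) = (1 - / INR n) * / 2 by rewrite /pairs; field; lra.
  have hin : / INR n <= / 2 by apply: Rinv_le_contravar; lra.
  have hin0 : 0 < / INR n by apply: Rinv_0_lt_compat; lra.
  rewrite e -Rpower_mult_distr ?hP; [|lra|lra]; split.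
  + have -> : - Rpower (/ 2) (1 - b) * / INR n + Rpower (/ 2) (1 - b)
            = (1 - / INR n) * Rpower (/ 2) (1 - b) by ring.
    apply: Rmult_le_compat_r; first exact/Rlt_le/Rpower_pos.
    rewrite /Rpower -{1}(exp_ln (1 - / INR n)); last lra.
    apply: exp_le; have : ln (1 - / INR n) <= 0 by rewrite -ln_1; apply: ln_le; lra.
    nra.
  + have : Rpower (1 - / INR n) (1 - b) <= 1.
      rewrite /Rpower -[X in _ <= X]exp_0; apply: exp_le.
      have : ln (1 - / INR n) <= 0 by rewrite -ln_1; apply: ln_le; lra.
      nra.
    have := Rpower_pos (/ 2) (1 - b); nra.
- have := Un_cv_affine _ _ (- P) P Un_cv_inv_INR.
  by rewrite Rmult_0_r Rplus_0_l => /is_lim_seq_Reals.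
- exact: is_lim_seq_const.
Qed.

Lemma rate_scaled_upper b g lam n : 0 < b < 1 -> is_Gamma b g -> is_total_rate b lam -> (2 <= n)%N ->
  Rpower (INR n) (2 * (b - 1)) * lam n <=
    Rpower (pairs n / (INR n * INR n)) (1 - b) * (g / (1 - b)) + Rpower (INR n) (2 * (b - 1))
    + Rpower (INR (cutoff n) / (INR n * INR n)) (1 - b) * (/ (1 - b) + 2).
Proof.
move=> hb hG hlam hn; have hnR := INR_ge2 hn; have [hnL _] := cutoff_bounds n hn.
have hL : 0 < INR (cutoff n) by apply: INR_gt0; exact: leq_trans (ltnW hn) hnL.
have hA := Rpower_pos (INR n) (2 * (b - 1)).
apply: Rle_trans (Rmult_le_compat_l _ _ _ (Rlt_le _ _ hA) (rate_upper_bound b g lam n hb hG hlam hn)) _.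
rewrite -(Rpower_rescale b (INR n) (pairs n) ltac:(lra) (pairs_pos n hn)).
rewrite -(Rpower_rescale b (INR n) (INR (cutoff n)) ltac:(lra) hL).
by apply: Req_le; field; lra.
Qed.

Lemma rate_scaled_lower b g lam e : 0 < b < 1 -> is_Gamma b g -> is_total_rate b lam -> 0 < e ->
  exists N, forall n, (N <= n)%N ->
    (Rpower (pairs n / (INR n * INR n)) (1 - b) * (g - e) - Rpower (INR n) (2 * (b - 1))) / (1 - b)
      <= Rpower (INR n) (2 * (b - 1)) * lam n.
Proof.
move=> hb hG hlam he; have hc : 0 < 1 - b by lra.
have [d [M [hd hgamma]]] := gamma_approx_below b g hG e he.
have [N hN] := eventually_gt (2 * M).
exists (maxn 2 N) => n hn.
have hn2 : (2 <= n)%N by exact: leq_trans (leq_maxl _ _) hn.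
have hnM := hN n (leq_trans (leq_maxr _ _) hn).
have hnR := INR_ge2 hn2; have [hm1 _] := pairs_bounds n hn2; have hm := pairs_pos n hn2.
have [K hK] := nat_above (pairs n / d); have hK0 := pos_INR K.
have hxd : pairs n / (INR K + 1) < d.
  apply/Rlt_div_l; first lra.
  have := Rmult_lt_compat_r d _ _ hd hK.
  have -> : pairs n / d * d = pairs n by field; lra.
  nra.
have hx0 : 0 < pairs n / (INR K + 1) by apply: Rdiv_lt_0_compat; lra.
have hxm : pairs n / (INR K + 1) <= pairs n by apply/Rle_div_l; nra.
have hMm : M < pairs n.
  have : INR n / 2 <= INR n * INR n / 4 by nra.
  lra.
have hI := hgamma _ _ hx0 hxd hMm hxm.
have hlow := rate_lower_bound b lam n K hb hlam hn2.
have hpm := Rpower_pos (pairs n) (1 - b).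
have hA := Rpower_pos (INR n) (2 * (b - 1)).
have : (Rpower (pairs n) (1 - b) * (g - e) - 1) / (1 - b) <= lam n.
  apply: Rle_trans hlow; apply: Rmult_le_compat_r; first exact/Rlt_le/Rinv_0_lt_compat.
  by have := Rmult_le_compat_l _ _ _ (Rlt_le _ _ hpm) (Rlt_le _ _ hI); lra.
move=> /(Rmult_le_compat_l _ _ _ (Rlt_le _ _ hA)); apply: Rle_trans; apply: Req_le.
by rewrite -Rpower_rescale //; [field; lra | lra].
Qed.

Theorem rate_asymptotics (b : R) : 0 < b < 1 -> forall g, is_Gamma b g ->
  forall lam, is_total_rate b lam ->
  Un_cv (fun n => Rpower (INR n) (2 * (b - 1)) * lam n) (Rpower 2 (b - 1) * g / (1 - b)).
Proof.
move=> hb g hG lam hlam; have hc : 0 < 1 - b by lra.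
set P := Rpower 2 (b - 1); have hP : 0 < P by exact: Rpower_pos.
have /is_lim_seq_Reals ha := pairs_scale_cv b hb.
have /is_lim_seq_Reals hA := scale_cv0 b (proj2 hb).
have /is_lim_seq_Reals hL := cutoff_scale_cv0 b (proj2 hb).
apply: Un_cv_from_bounds => eps he.
- exists (fun n => Rpower (pairs n / (INR n * INR n)) (1 - b) * (g / (1 - b)) + Rpower (INR n) (2 * (b - 1))
               + Rpower (INR (cutoff n) / (INR n * INR n)) (1 - b) * (/ (1 - b) + 2)).
  exists (P * g / (1 - b)), 2%N; split; [|split; [lra | move=> n hn; exact: rate_scaled_upper]].
  apply/is_lim_seq_Reals.
  have := is_lim_seq_plus' _ _ _ _ (is_lim_seq_plus' _ _ _ _ (is_lim_seq_mult' _ _ _ _ ha (is_lim_seq_const (g / (1 - b)))) hA)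
            (is_lim_seq_mult' _ _ _ _ hL (is_lim_seq_const (/ (1 - b) + 2))).
  by have -> : P * (g / (1 - b)) + 0 + 0 * (/ (1 - b) + 2) = P * g / (1 - b) by field; lra.
- set e := eps * (1 - b) / (2 * P); have he0 : 0 < e by apply: Rdiv_lt_0_compat; nra.
  have [N hN] := rate_scaled_lower b g lam e hb hG hlam he0.
  exists (fun n => (Rpower (pairs n / (INR n * INR n)) (1 - b) * (g - e) - Rpower (INR n) (2 * (b - 1))) * / (1 - b)).
  exists ((P * (g - e) - 0) * / (1 - b)), N; split; [|split; [|exact: hN]].
    apply/is_lim_seq_Reals; apply: is_lim_seq_mult' (is_lim_seq_const _).
    exact: is_lim_seq_minus' (is_lim_seq_mult' _ _ _ _ ha (is_lim_seq_const _)) hA.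
  have -> : (P * (g - e) - 0) * / (1 - b) = P * g / (1 - b) - eps / 2 by rewrite /e; field; lra.
  lra.
Qed.

Theorem mainTheorem5 :
  (forall beta : R, 0 < beta < 1 ->
     forall g : R, is_Gamma beta g ->
     forall lam : nat -> R, is_total_rate beta lam ->
       Un_cv (fun n => Rpower (INR n) (2 * (beta - 1)) * lam n)
             (Rpower 2 (beta - 1) * g / (1 - beta)))
  /\
  (forall lam : nat -> R, is_total_rate 1 lam ->
       Un_cv (fun n => lam n / ln (INR n)) 2).
Proof. split; [exact: rate_asymptotics | exact: rate1_asymptotics]. Qed.
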